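(* Let $T\in B(\mathcal{F})$ be a block-diagonal operator such that $[T,R_i^*]\in\mathcal{S}$ for $1\le i\le d$. Then $T\in\mathcal{C}=C^*(L_1,\ldots,L_d)$.
   Context: $d\ge2$; $\xi_1,\ldots,\xi_d$ is the standard orthonormal basis of $\mathbb{C}^d$. $\mathcal{F}=\bigoplus_{n\ge0}\mathcal{F}_n$ is the full Fock space, $\mathcal{F}_0=\mathbb{C}\Omega$, $\mathcal{F}_n=(\mathbb{C}^d)^{\otimes n}$ with the usual inner product. $L_j\eta=\xi_j\otimes\eta$, $R_j\eta=\eta\otimes\xi_j$ (with $L_j\Omega=R_j\Omega=\xi_j$). $T$ is block-diagonal if $T(\mathcal{F}_n)\subseteq\mathcal{F}_n$ for all $n$. $\mathcal{S}$ is the set of operators $S\in B(\mathcal{F})$ which are band-limited (there is $b\ge0$ with $S(\mathcal{F}_n)\subseteq\bigoplus_{|m-n|\le b}\mathcal{F}_m$ for all $n$) and summable ($\sum_{n\ge0}\|S|_{\mathcal{F}_n}\|<\infty$). *)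

From HB Require Import structures.
From mathcomp Require Import all_boot all_order all_algebra.
From mathcomp Require Import complex.
From mathcomp Require Import all_classical all_reals ereal topology normedtype sequences esum.
Set Implicit Arguments. Unset Strict Implicit. Unset Printing Implicit Defensive.
Import Order.TTheory GRing.Theory Num.Theory.
Local Open Scope ring_scope.

Section FockDefs.
Variables (R : realType) (d : nat).

(* Orthonormal basis of the full Fock space: words over {0,..,d-1}.
   The empty word is Omega, the word [:: i1; ...; in] is xi_i1 (x) ... (x) xi_in. *)
Definition word := seq 'I_d.

Definition vec := word -> R[i].
Definition op := vec -> vec.

Definition sqabs (z : R[i]) : R := (complex.Re z) ^+ 2 + (complex.Im z) ^+ 2.

Definition sqnorm (f : vec) : \bar R :=
  (\esum_(w in [set: word]) (sqabs (f w))%:E)%E.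

Definition l2 (f : vec) : Prop := (sqnorm f < +oo)%E.

Definition vnorm (f : vec) : R := Num.sqrt (fine (sqnorm f)).

Definition bounded_op (T : op) : Prop :=
  [/\ (forall f, l2 f -> l2 (T f)),
      (forall (a : R[i]) f g, l2 f -> l2 g ->
         T (fun w => a * f w + g w) = (fun w => a * T f w + T g w))
    & exists M : R, forall f, l2 f -> vnorm (T f) <= M * vnorm f].

Definition in_level (n : nat) (f : vec) : Prop :=
  forall w : word, size w != n -> f w = 0.

Definition Lop (j : 'I_d) : op := fun f w =>
  match w with [::] => 0 | k :: w' => if k == j then f w' else 0 end.
Definition Lstar (j : 'I_d) : op := fun f w => f (j :: w).
Definition Rop (j : 'I_d) : op := fun f w =>
  match rev w with [::] => 0 | k :: u => if k == j then f (rev u) else 0 end.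
Definition Rstar (j : 'I_d) : op := fun f w => f (rcons w j).

Definition opsub (S T : op) : op := fun f w => S f w - T f w.
Definition commutator (S T : op) : op := fun f w => S (T f) w - T (S f) w.

Definition block_diagonal (T : op) : Prop :=
  forall n f, l2 f -> in_level n f -> in_level n (T f).

Definition band_limited (S : op) : Prop :=
  exists b : nat, forall n f, l2 f -> in_level n f ->
    forall w : word, S f w != 0 -> (`|(size w)%:Z - n%:Z| <= b)%N.

Definition restr_norm (S : op) (n : nat) : \bar R :=
  ereal_sup [set (vnorm (S f))%:E | f in
              [set f | l2 f /\ in_level n f /\ vnorm f <= 1]].

Definition summable_op (S : op) : Prop :=
  (\sum_(n <oo) restr_norm S n < +oo)%E.

Definition classS (S : op) : Prop :=
  bounded_op S /\ band_limited S /\ summable_op S.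

(* the *-algebra generated by L_1..L_d (non-unital polynomials in L_j, L_j^* ) *)
Inductive star_poly_L : op -> Prop :=
  | spL_L j : star_poly_L (Lop j)
  | spL_Lstar j : star_poly_L (Lstar j)
  | spL_add S T : star_poly_L S -> star_poly_L T ->
      star_poly_L (fun f w => S f w + T f w)
  | spL_scale (a : R[i]) S : star_poly_L S -> star_poly_L (fun f w => a * S f w)
  | spL_mul S T : star_poly_L S -> star_poly_L T -> star_poly_L (fun f => S (T f)).

(* C = C^*(L_1,...,L_d): operator-norm closure of the *-algebra above *)
Definition in_Cuntz_Toeplitz (T : op) : Prop :=
  forall eps : R, 0 < eps -> exists P : op, star_poly_L P /\
    forall f, l2 f -> vnorm (opsub T P f) <= eps * vnorm f.

End FockDefs.

From HB Require Import structures.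
From mathcomp Require Import all_boot all_order all_algebra.
From mathcomp Require Import complex.
From mathcomp Require Import all_classical all_reals ereal topology normedtype sequences esum.
From mathcomp Require Import ring lra.
Set Implicit Arguments. Unset Strict Implicit. Unset Printing Implicit Defensive.
Import Order.TTheory GRing.Theory Num.Theory.
Local Open Scope classical_set_scope.
Local Open Scope ring_scope.

(* Let [approx T m] act as [T] on the levels below [m] and as [T|F_m (x) 1] on
   [F_m (x) F_k]; it is a polynomial in the [L_j] and [L_j^*], built from the matrix units
   [L_u P_Omega L_v^*] and the shifts [L_u L_v^*]. On the levels [>= m] it commutes with every
   [R_i^*], so on [F_(n+1)] the error [T - approx T m] is [(T - approx T m) R_i^*] on [F_n] minus
   the commutator [[T, R_i^*]]. By induction and Minkowski's inequality the error on [F_n] has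
   norm at most [sum_(m < k <= n) sum_i ||[T, R_i^*]|F_k||], which summability makes small
   uniformly in [n] once [m] is large; as [T] is block-diagonal, so is the error, whence the
   operator-norm bound. *)

Lemma big_if_eq_uniq (V : nmodType) (T : eqType) (s : seq T) (u : T) (F : T -> V) :
  uniq s -> \sum_(x <- s) (if x == u then F x else 0) = if u \in s then F u else 0.
Proof.
elim: s => [|x s IH] /=; first by rewrite big_nil.
case/andP=> xs us; rewrite big_cons IH // inE.
case: eqVneq => [<-|_] /=; last by rewrite add0r.
by rewrite (negbTE xs) addr0.
Qed.

Section Words.
Variable d : nat.

Fixpoint words (n : nat) : seq (seq 'I_d) :=
  if n is n'.+1 then [seq rcons w i | i <- enum 'I_d, w <- words n'] else [:: [::]].

Lemma mem_words n w : (w \in words n) = (size w == n).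
Proof.
elim: n w => [|n IH] w /=; first by rewrite inE; case: w.
apply/allpairsP/idP => [[[i w'] /= [_ Hw ->]]|].
  by rewrite size_rcons eqSS -IH.
case/lastP: w => [//|w' i]; rewrite size_rcons eqSS -IH => Hw.
by exists (i, w'); rewrite /= mem_enum.
Qed.

Lemma uniq_words n : uniq (words n).
Proof.
elim: n => [//|n IH] /=; apply: allpairs_uniq => //; first exact: enum_uniq.
by move=> [i1 w1] [i2 w2] _ _ /= /eqP; rewrite eqseq_rcons => /andP[/eqP -> /eqP ->].
Qed.

Lemma big_words_rcons (V : nmodType) n (F : seq 'I_d -> V) :
  \sum_(w <- words n.+1) F w = \sum_(i <- enum 'I_d) \sum_(w <- words n) F (rcons w i).
Proof. by rewrite /= big_allpairs_dep. Qed.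

End Words.

Section StarPoly.
Context {R : realType} {d : nat} (j0 : 'I_d).
Local Notation op := (op R d).
Local Notation star_poly := (@star_poly_L R d).

Lemma star_poly_ext (S T : op) : (forall f w, S f w = T f w) -> star_poly S -> star_poly T.
Proof.
by move=> ST; have -> : T = S by apply: funext => f; apply: funext => w; rewrite ST.
Qed.

(* [L_j^* L_j = 1]: this is where [d > 0] is needed. *)
Lemma star_poly_id : star_poly (fun f => f).
Proof.
apply: (star_poly_ext _ (spL_mul (spL_Lstar R j0) (spL_L R j0))) => f w.
by rewrite /Lstar /Lop eqxx.
Qed.

Lemma star_poly_sum (I : Type) (s : seq I) (F : I -> op) :
  (forall i, star_poly (F i)) -> star_poly (fun f w => \sum_(i <- s) F i f w).
Proof.
move=> hF; elim: s => [|i s IH].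
  by apply: (star_poly_ext _ (spL_scale 0 star_poly_id)) => f w; rewrite big_nil mul0r.
by apply: (star_poly_ext _ (spL_add (hF i) IH)) => f w; rewrite big_cons.
Qed.

Definition Lword (u : seq 'I_d) : op := fun f w =>
  if take (size u) w == u then f (drop (size u) w) else 0.

Definition Lword_adj (v : seq 'I_d) : op := fun f w => f (v ++ w).

Definition vacuum_proj : op := fun f w => if w == [::] then f w else 0.

Lemma star_poly_Lword u : star_poly (Lword u).
Proof.
elim: u => [|j u IH].
  by apply: (star_poly_ext _ star_poly_id) => f w; rewrite /Lword take0 drop0.
apply: (star_poly_ext _ (spL_mul (spL_L R j) IH)) => f w.
rewrite /Lword /Lop; case: w => [|k w] //=.
by rewrite eqseq_cons; case: eqVneq.
Qed.

Lemma star_poly_Lword_adj v : star_poly (Lword_adj v).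
Proof.
elim: v => [|j v IH]; first by apply: (star_poly_ext _ star_poly_id).
by apply: (star_poly_ext _ (spL_mul IH (spL_Lstar R j))).
Qed.

(* [P_Omega = 1 - sum_j L_j L_j^*] *)
Lemma star_poly_vacuum_proj : star_poly vacuum_proj.
Proof.
have LLstar : star_poly (fun f w => \sum_(j <- enum 'I_d) Lop j (Lstar j f) w).
  by apply: star_poly_sum => j; apply: spL_mul; [apply: spL_L|apply: spL_Lstar].
apply: (star_poly_ext _ (spL_add star_poly_id (spL_scale (-1) LLstar))) => f w.
rewrite /vacuum_proj mulN1r; case: w => [|k w] /=.
  by rewrite big1 ?subr0.
rewrite /Lop /Lstar (eq_bigr (fun j => if j == k then f (j :: w) else 0)).
  by rewrite big_if_eq_uniq ?enum_uniq // mem_enum subrr.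
by move=> j _; rewrite eq_sym.
Qed.

Definition shift_unit (u v : seq 'I_d) : op := fun f w =>
  if take (size u) w == u then f (v ++ drop (size u) w) else 0.

Definition matrix_unit (u v : seq 'I_d) : op := fun f w => if w == u then f v else 0.

Lemma star_poly_shift_unit u v : star_poly (shift_unit u v).
Proof.
exact: (star_poly_ext _ (spL_mul (star_poly_Lword u) (star_poly_Lword_adj v))).
Qed.

Lemma star_poly_matrix_unit u v : star_poly (matrix_unit u v).
Proof.
apply: (star_poly_ext _ (spL_mul (star_poly_Lword u)
          (spL_mul star_poly_vacuum_proj (star_poly_Lword_adj v)))) => f w.
rewrite /Lword /vacuum_proj /Lword_adj /matrix_unit.
have [->|neq] := eqVneq w u; first by rewrite take_size eqxx drop_size eqxx cats0.
case: eqVneq => // ht; case: eqVneq => // hd.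
by case/eqP: neq; rewrite -(cat_take_drop (size u) w) ht hd cats0.
Qed.

End StarPoly.

Lemma nneseries_tail_lt (R : realType) (u : nat -> \bar R) (e : R) :
  (forall k, 0 <= u k)%E -> (\sum_(k <oo) u k < +oo)%E -> 0 < e ->
  \forall N \near \oo, (\sum_(N <= k <oo) u k < e%:E)%E.
Proof.
move=> u0 fin e0.
have e0' : (0 < e%:E)%E by rewrite lte_fin.
exact: nneseries_tail_cvg fin (fun k _ => u0 k) _ (open_ereal_lt' e0').
Qed.

Lemma nneseries_ge_term (R : realType) (u : nat -> \bar R) n :
  (forall k, 0 <= u k)%E -> (u n <= \sum_(k <oo) u k)%E.
Proof.
move=> u0; apply: le_trans (nneseries_lim_ge n.+1 _) => //.
by rewrite big_nat_recr //= leeDr // sume_ge0.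
Qed.

Section ComplexNorm.
Variable R : realType.
Implicit Types a b z : R[i].

Lemma sqabs_ge0 z : 0 <= sqabs z.
Proof. by rewrite /sqabs addr_ge0 // sqr_ge0. Qed.

Lemma sqabs0 : sqabs (0 : R[i]) = 0.
Proof. by rewrite /sqabs /= expr0n /= addr0. Qed.

Lemma sqabs_real (r : R) : sqabs (Complex r 0) = r ^+ 2.
Proof. by rewrite /sqabs /= expr0n /= addr0. Qed.

Lemma sqabsM a z : sqabs (a * z) = sqabs a * sqabs z.
Proof. by rewrite /sqabs; case: a => [a1 a2]; case: z => [b1 b2] /=; ring. Qed.

Lemma sqabs_eq0 z : sqabs z = 0 -> z = 0.
Proof.
rewrite /sqabs; case: z => [a b] /= h.
have h1 := sqr_ge0 a; have h2 := sqr_ge0 b.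
have /eqP : a ^+ 2 = 0 by lra.
have /eqP : b ^+ 2 = 0 by lra.
by rewrite !sqrf_eq0 => /eqP -> /eqP ->.
Qed.

Lemma sqabsD_le a b : sqabs (a + b) <= 2 * sqabs a + 2 * sqabs b.
Proof.
rewrite /sqabs; case: a => [a1 a2]; case: b => [b1 b2] /=.
have := sqr_ge0 (a1 - b1); have := sqr_ge0 (a2 - b2).
rewrite !expr2 => h1 h2; nra.
Qed.

End ComplexNorm.

Section Levels.
Variables (R : realType) (d : nat).
Local Notation vec := (vec R d).
Local Notation words := (words d).
Implicit Types (f g : vec) (n k : nat).

Definition vec0 : vec := fun _ => 0.

Definition level_sqnorm f n : R := \sum_(w <- words n) sqabs (f w).

Definition proj_level n f : vec := fun w => if size w == n then f w else 0.

Lemma level_sqnorm_ge0 f n : 0 <= level_sqnorm f n.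
Proof. by apply: sumr_ge0 => w _; apply: sqabs_ge0. Qed.

Lemma sqnorm_levels f : sqnorm f = (\sum_(n <oo) (level_sqnorm f n)%:E)%E.
Proof.
rewrite /sqnorm; have -> : [set: word d] = \bigcup_n [set` words n].
  by apply/seteqP; split => w // _; exists (size w); rewrite //= mem_words.
rewrite nneseries_sum_bigcup; last 2 first.
- by move=> i j _ _ [w /= []]; rewrite !mem_words => /eqP <- /eqP.
- by move=> w; rewrite lee_fin sqabs_ge0.
apply: eq_eseriesr => n _.
rewrite esum_fset; [|exact: finite_seq|by move=> w _; rewrite lee_fin sqabs_ge0].
by rewrite -fsbig_seq ?uniq_words // sumEFin.
Qed.

Lemma sqnorm_ge0 f : (0 <= sqnorm f)%E.
Proof.
by rewrite sqnorm_levels; apply: nneseries_ge0 => n _ _; rewrite lee_fin level_sqnorm_ge0.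
Qed.

Lemma level_sqnorm_le_sqnorm f n : ((level_sqnorm f n)%:E <= sqnorm f)%E.
Proof.
by rewrite sqnorm_levels; apply: nneseries_ge_term => k; rewrite lee_fin level_sqnorm_ge0.
Qed.

Lemma sqabs_le_level_sqnorm f w : sqabs (f w) <= level_sqnorm f (size w).
Proof.
rewrite /level_sqnorm (bigD1_seq w) ?mem_words ?uniq_words //= lerDl.
by apply: sumr_ge0 => v _; apply: sqabs_ge0.
Qed.

Lemma level_sqnorm_out n f k : in_level n f -> k != n -> level_sqnorm f k = 0.
Proof.
move=> hf kn; rewrite /level_sqnorm big_seq big1 // => w; rewrite mem_words => /eqP wk.
by rewrite hf ?wk // sqabs0.
Qed.

Lemma sqnorm_in_level n f : in_level n f -> sqnorm f = (level_sqnorm f n)%:E.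
Proof.
move=> hf; rewrite sqnorm_levels (@nneseries_split R _ 0 n.+1); last first.
  by move=> k _; rewrite lee_fin level_sqnorm_ge0.
rewrite add0n eseries0 ?adde0; last first.
  by move=> k nk _; rewrite (level_sqnorm_out hf) // gtn_eqF.
rewrite big_nat_recr //= big_nat big1 ?add0e // => k /andP[_ kn].
by rewrite (level_sqnorm_out hf) // ltn_eqF.
Qed.

Lemma l2_in_level n f : in_level n f -> l2 f.
Proof. by move=> hf; rewrite /l2 (sqnorm_in_level hf) ltry. Qed.

Lemma vnorm_ge0 f : 0 <= vnorm f.
Proof. exact: sqrtr_ge0. Qed.

Lemma vnorm_in_level n f : in_level n f -> vnorm f = Num.sqrt (level_sqnorm f n).
Proof. by move=> hf; rewrite /vnorm (sqnorm_in_level hf). Qed.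

Lemma sqnorm_vnorm f : l2 f -> sqnorm f = ((vnorm f) ^+ 2)%:E.
Proof.
rewrite /l2 /vnorm; have := sqnorm_ge0 f; case: (sqnorm f) => // r.
by rewrite lee_fin => r0 _ /=; rewrite sqr_sqrtr.
Qed.

Lemma level_sqnorm_le_vnorm f n : l2 f -> level_sqnorm f n <= vnorm f ^+ 2.
Proof. by move=> hf; rewrite -lee_fin -sqnorm_vnorm // level_sqnorm_le_sqnorm. Qed.

Lemma sqabs_le_vnorm f w : l2 f -> sqabs (f w) <= vnorm f ^+ 2.
Proof. by move=> hf; apply: le_trans (sqabs_le_level_sqnorm f w) (level_sqnorm_le_vnorm _ hf). Qed.

Lemma l2_vec0 : l2 vec0.
Proof. exact: (@l2_in_level 0). Qed.

Lemma vnorm0 : vnorm vec0 = 0.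
Proof.
rewrite (@vnorm_in_level 0) // /level_sqnorm big1 ?sqrtr0 // => w _.
exact: sqabs0.
Qed.

Lemma vnorm_eq0 f : l2 f -> vnorm f = 0 -> f = vec0.
Proof.
move=> hf f0; apply: funext => w; apply: sqabs_eq0; apply/eqP.
by rewrite eq_le sqabs_ge0 andbT -[0](mulr0 (0 : R)) -f0 -expr2 sqabs_le_vnorm.
Qed.

Lemma sqnorm_le_levels f g (c : R) : 0 <= c ->
  (forall n, level_sqnorm g n <= c * level_sqnorm f n) -> (sqnorm g <= c%:E * sqnorm f)%E.
Proof.
move=> c0 gf; rewrite !sqnorm_levels -nneseriesZl; last first.
  by move=> k _; rewrite lee_fin level_sqnorm_ge0.
apply: lee_nneseries => [k _ _|n _]; first by rewrite lee_fin level_sqnorm_ge0.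
by rewrite -EFinM lee_fin.
Qed.

Lemma l2_le_levels f g (c : R) : 0 <= c -> l2 f ->
  (forall n, level_sqnorm g n <= c * level_sqnorm f n) -> l2 g.
Proof.
move=> c0 hf gf; rewrite /l2; apply: le_lt_trans (sqnorm_le_levels c0 gf) _.
by rewrite lte_mul_pinfty.
Qed.

Lemma proj_level_in_level n f : in_level n (proj_level n f).
Proof. by move=> w /negbTE; rewrite /proj_level => ->. Qed.

Lemma l2_proj_level n f : l2 (proj_level n f).
Proof. apply: l2_in_level; exact: proj_level_in_level. Qed.

Lemma vnorm_le_levels f g (c : R) : 0 <= c -> l2 f ->
  (forall n, level_sqnorm g n <= c ^+ 2 * level_sqnorm f n) -> vnorm g <= c * vnorm f.
Proof.
move=> c0 hf gf; have c20 : 0 <= c ^+ 2 by apply: sqr_ge0.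
have := sqnorm_le_levels c20 gf.
rewrite (sqnorm_vnorm hf) (sqnorm_vnorm (l2_le_levels c20 hf gf)) -EFinM lee_fin -exprMn.
by rewrite ler_pXn2r // nnegrE ?mulr_ge0 ?vnorm_ge0.
Qed.

Lemma level_sqnorm_scale (a : R[i]) f n :
  level_sqnorm (fun w => a * f w) n = sqabs a * level_sqnorm f n.
Proof. by rewrite /level_sqnorm mulr_sumr; apply: eq_bigr => w _; rewrite sqabsM. Qed.

Lemma vnorm_scale (a : R[i]) f : l2 f ->
  vnorm (fun w => a * f w) = Num.sqrt (sqabs a) * vnorm f.
Proof.
rewrite /l2 /vnorm => hf.
have -> : sqnorm (fun w => a * f w) = ((sqabs a)%:E * sqnorm f)%E.
  rewrite !sqnorm_levels -nneseriesZl; last by move=> k _; rewrite lee_fin level_sqnorm_ge0.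
  by apply: eq_eseriesr => n _; rewrite level_sqnorm_scale EFinM.
move: hf (sqnorm_ge0 f); case: (sqnorm f) => // s _; rewrite lee_fin => s0 /=.
by rewrite sqrtrM // sqabs_ge0.
Qed.

Lemma l2_add f g : l2 f -> l2 g -> l2 (fun w => f w + g w).
Proof.
rewrite /l2 !sqnorm_levels => hf hg.
have lev0 h k : (0 <= (2 * level_sqnorm h k)%:E)%E.
  by rewrite lee_fin mulr_ge0 ?level_sqnorm_ge0.
apply: (@le_lt_trans _ _ (\sum_(n <oo) ((2 * level_sqnorm f n)%:E
                                      + (2 * level_sqnorm g n)%:E))%E).
  apply: lee_nneseries => [k _ _|n _]; first by rewrite lee_fin level_sqnorm_ge0.
  rewrite -EFinD lee_fin /level_sqnorm !mulr_sumr -big_split /=.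
  by apply: ler_sum => w _; apply: sqabsD_le.
have twice h : (\sum_(n <oo) (2 * level_sqnorm h n)%:E
                = 2%:E * \sum_(n <oo) (level_sqnorm h n)%:E)%E.
  rewrite -nneseriesZl; last by move=> k _; rewrite lee_fin level_sqnorm_ge0.
  by apply: eq_eseriesr => n _; rewrite EFinM.
rewrite nneseriesD => [|k _ _|k _ _]; rewrite ?lev0 // !twice.
by rewrite lte_add_pinfty // lte_mul_pinfty.
Qed.

Lemma l2_sum (I : Type) (s : seq I) (F : I -> vec) : (forall i, l2 (F i)) ->
  l2 (fun w => \sum_(i <- s) F i w).
Proof.
move=> hF; elim: s => [|i s IH].
  by apply: (@l2_in_level 0) => w _; rewrite big_nil.
under eq_fun do rewrite big_cons; exact: l2_add.
Qed.

Lemma level_sqnorm_proj n f : level_sqnorm (proj_level n f) n = level_sqnorm f n.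
Proof.
rewrite /level_sqnorm big_seq [RHS]big_seq; apply: eq_bigr => w.
by rewrite mem_words /proj_level => ->.
Qed.

End Levels.

Section BoundedOp.
Variables (R : realType) (d : nat) (S : op R d).
Hypothesis hS : bounded_op S.
Local Notation vec := (vec R d).
Implicit Types (f g : vec) (n k : nat).

Lemma bounded_op_l2 f : l2 f -> l2 (S f).
Proof. by case: hS => + _ _; apply. Qed.

Lemma bounded_opD f g : l2 f -> l2 g -> S (fun w => f w + g w) = fun w => S f w + S g w.
Proof.
case: hS => _ lin _ hf hg; have := lin 1 f g hf hg.
by under eq_fun do rewrite mul1r; move=> ->; under eq_fun do rewrite mul1r.
Qed.

Lemma bounded_op0 : S (@vec0 R d) = @vec0 R d.
Proof.
have := bounded_opD (@l2_vec0 R d) (@l2_vec0 R d); rewrite /vec0; under eq_fun do rewrite addr0.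
move=> S0; apply: funext => w.
by move: (congr1 (fun F => F w) S0) => /=; rewrite -{1}[S _ w]addr0 => /addrI <-.
Qed.

Lemma bounded_opZ a f : l2 f -> S (fun w => a * f w) = fun w => a * S f w.
Proof.
case: hS => _ lin _ hf; have := lin a f (@vec0 R d) hf (@l2_vec0 R d).
by rewrite bounded_op0 /vec0; under eq_fun do rewrite addr0; move=> ->;
  under eq_fun do rewrite addr0.
Qed.

Lemma bounded_op_sum (I : Type) (s : seq I) (F : I -> vec) : (forall i, l2 (F i)) ->
  S (fun w => \sum_(i <- s) F i w) = fun w => \sum_(i <- s) S (F i) w.
Proof.
move=> hF; elim: s => [|i s IH].
  by under eq_fun do rewrite big_nil; rewrite bounded_op0; under eq_fun do rewrite big_nil.
under eq_fun do rewrite big_cons; rewrite bounded_opD ?IH //; last exact: l2_sum.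
by under [RHS]eq_fun do rewrite big_cons.
Qed.

Lemma bounded_op_sqabs_le : exists2 M : R, 0 <= M &
  forall f w, l2 f -> ((sqabs (S f w))%:E <= M%:E * sqnorm f)%E.
Proof.
case: hS => _ _ [M hM]; exists (M ^+ 2) => [|f w hf]; first exact: sqr_ge0.
rewrite sqnorm_vnorm // -EFinM lee_fin -exprMn.
apply: le_trans (sqabs_le_level_sqnorm _ _) _.
apply: le_trans (level_sqnorm_le_vnorm _ (bounded_op_l2 hf)) _.
rewrite ler_pXn2r ?nnegrE ?vnorm_ge0 ?hM //; exact: le_trans (vnorm_ge0 _) (hM f hf).
Qed.

Lemma restr_norm_ge0 n : (0 <= restr_norm S n)%E.
Proof.
apply: (@le_trans _ _ (vnorm (S (@vec0 R d)))%:E); first by rewrite lee_fin vnorm_ge0.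
apply: ereal_sup_ubound; exists (@vec0 R d) => //.
by split; [exact: l2_vec0|split; rewrite ?vnorm0].
Qed.

Lemma restr_norm_bound n f : (restr_norm S n < +oo)%E -> in_level n f ->
  vnorm (S f) <= fine (restr_norm S n) * vnorm f.
Proof.
move=> fin lf; have hf := l2_in_level lf.
have [f0|fpos] := eqVneq (vnorm f) 0.
  by rewrite (vnorm_eq0 hf f0) bounded_op0 vnorm0 mulr0.
have vgt : 0 < vnorm f by rewrite lt_def fpos vnorm_ge0.
have [a sa] : exists a : R[i], Num.sqrt (sqabs a) = (vnorm f)^-1.
  exists (Complex (vnorm f)^-1 0).
  by rewrite sqabs_real sqrtr_sqr ger0_norm // invr_ge0 vnorm_ge0.
have la : in_level n (fun w => a * f w) by move=> w /lf ->; rewrite mulr0.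
have : ((vnorm (S (fun w => a * f w)))%:E <= restr_norm S n)%E.
  apply: ereal_sup_ubound; exists (fun w => a * f w) => //.
  by split; [exact: l2_in_level la|split; rewrite // vnorm_scale // sa mulVf].
rewrite bounded_opZ // vnorm_scale ?sa; last exact: bounded_op_l2.
move: fin (restr_norm_ge0 n); case: (restr_norm S n) => // r _ _.
by rewrite lee_fin /= -ler_pdivrMr // mulrC.
Qed.

Definition tail_levels N f : vec := fun w => if (N <= size w)%N then f w else 0.

Lemma sqnorm_tail_levels_le N f :
  (sqnorm (tail_levels N f) <= \sum_(N <= k <oo) (level_sqnorm f k)%:E)%E.
Proof.
rewrite sqnorm_levels (@nneseries_split R _ 0 N); last first.
  by move=> k _; rewrite lee_fin level_sqnorm_ge0.
rewrite add0n big_nat big1 ?add0e => [|k /andP[_ kN]]; last first.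
  rewrite /level_sqnorm big_seq big1 // => v; rewrite mem_words /tail_levels => /eqP ->.
  by rewrite leqNgt kN sqabs0.
apply: lee_nneseries => [k _ _|k _]; first by rewrite lee_fin level_sqnorm_ge0.
rewrite lee_fin; apply: ler_sum => v _; rewrite /tail_levels.
by case: ifP => // _; rewrite sqabs0 sqabs_ge0.
Qed.

Lemma l2_tail_levels N f : l2 f -> l2 (tail_levels N f).
Proof.
move=> hf; apply: (l2_le_levels (c := 1)) hf _ => // k; rewrite mul1r.
apply: ler_sum => v _; rewrite /tail_levels.
by case: ifP => // _; rewrite sqabs0 sqabs_ge0.
Qed.

Lemma split_levels N f :
  f = fun w => \sum_(k <- iota 0 N) proj_level k f w + tail_levels N f w.
Proof.
apply: funext => w; rewrite /proj_level /tail_levels.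
under eq_bigr do rewrite eq_sym.
rewrite big_if_eq_uniq ?iota_uniq // mem_iota add0n.
by case: leqP; rewrite ?addr0 ?add0r.
Qed.

Hypothesis hB : block_diagonal S.

Lemma block_diagonal_split f w N : l2 f -> (size w < N)%N ->
  S f w = S (proj_level (size w) f) w + S (tail_levels N f) w.
Proof.
move=> hf wN; rewrite {1}(split_levels N f) bounded_opD; last 2 first.
- by apply: l2_sum => k; apply: l2_proj_level.
- exact: l2_tail_levels.
rewrite bounded_op_sum; last by move=> k; apply: l2_proj_level.
congr (_ + _); rewrite (eq_bigr (fun k => if k == size w then S (proj_level k f) w else 0)).
  by rewrite big_if_eq_uniq ?iota_uniq // mem_iota add0n wN.
move=> k _; case: eqVneq => // kw.
by apply: (hB (l2_proj_level k f) (@proj_level_in_level _ _ k f)); rewrite eq_sym.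
Qed.

(* The tails of [f] tend to [0] in norm, and [S] is bounded. *)
Lemma block_diagonal_coord f w : l2 f -> S f w = S (proj_level (size w) f) w.
Proof.
move=> hf; apply/eqP; rewrite -subr_eq0; apply/eqP/sqabs_eq0/eqP.
rewrite eq_le sqabs_ge0 andbT; apply/ler_addgt0Pr => e e0; rewrite add0r.
have [M M0 hM] := bounded_op_sqabs_le.
have eM : 0 < e / (M + 1) by rewrite divr_gt0 // ltr_wpDl.
have fin : (\sum_(k <oo) (level_sqnorm f k)%:E < +oo)%E by rewrite -sqnorm_levels.
have u0 k : (0 <= (level_sqnorm f k)%:E)%E by rewrite lee_fin level_sqnorm_ge0.
have tail := nneseries_tail_lt u0 fin eM.
near \oo => N.
rewrite (block_diagonal_split (N := N) hf); last by near: N; exists (size w).+1.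
rewrite addrAC subrr add0r -lee_fin.
apply: le_trans (hM _ _ (l2_tail_levels N hf)) _.
have small : (sqnorm (tail_levels N f) <= (e / (M + 1))%:E)%E.
  by apply: le_trans (sqnorm_tail_levels_le N f) (ltW _); near: N.
apply: le_trans (lee_wpmul2l _ small) _; first by rewrite lee_fin.
rewrite -EFinM lee_fin mulrA ler_pdivrMr ?ltr_wpDl //; nra.
Unshelve. all: by end_near.
Qed.

End BoundedOp.

Section Approximant.
Variables (R : realType) (d : nat) (T : op R d).
Local Notation vec := (vec R d).
Local Notation words := (words d).
Implicit Types (f : vec) (u v w : word d) (k m n : nat).

Definition basis_vec v : vec := fun w => if w == v then 1 else 0.

Definition matrix_coef u v : R[i] := T (basis_vec v) u.

Definition approx m : op R d := fun f w =>
  \sum_(k <- iota 0 m) \sum_(u <- words k) \sum_(v <- words k)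
     matrix_coef u v * matrix_unit u v f w
  + \sum_(u <- words m) \sum_(v <- words m) matrix_coef u v * shift_unit u v f w.

Lemma star_poly_approx (j0 : 'I_d) m : star_poly_L (approx m).
Proof.
apply: spL_add; apply: (star_poly_sum j0) => k.
- apply: (star_poly_sum j0) => u; apply: (star_poly_sum j0) => v.
  exact: spL_scale (star_poly_matrix_unit j0 u v).
- apply: (star_poly_sum j0) => v; exact: spL_scale (star_poly_shift_unit j0 k v).
Qed.

Lemma sum_matrix_units k f w :
  \sum_(u <- words k) \sum_(v <- words k) matrix_coef u v * matrix_unit u v f w
  = if size w == k then \sum_(v <- words k) matrix_coef w v * f v else 0.
Proof.
rewrite (eq_bigr (fun u => if u == w then \sum_(v <- words k) matrix_coef u v * f v else 0)).
  by rewrite big_if_eq_uniq ?uniq_words // mem_words.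
move=> u _; rewrite /matrix_unit eq_sym; case: ifP => _ //.
by rewrite big1 // => v _; rewrite mulr0.
Qed.

Lemma sum_shift_units m f w : (m <= size w)%N ->
  \sum_(u <- words m) \sum_(v <- words m) matrix_coef u v * shift_unit u v f w
  = \sum_(v <- words m) matrix_coef (take m w) v * f (v ++ drop m w).
Proof.
move=> mw; rewrite big_seq (eq_bigr (fun u => if u == take m w then
   \sum_(v <- words m) matrix_coef u v * f (v ++ drop m w) else 0)).
  rewrite -big_seq big_if_eq_uniq ?uniq_words // mem_words size_take.
  by case: ltngtP mw => // [_ _|->]; rewrite eqxx.
move=> u; rewrite mem_words => /eqP um; rewrite /shift_unit um eq_sym.
by case: ifP => _ //; rewrite big1 // => v _; rewrite mulr0.
Qed.

Lemma approx_low m f w : (size w < m)%N ->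
  approx m f w = \sum_(v <- words (size w)) matrix_coef w v * f v.
Proof.
move=> wm; rewrite /approx [X in _ + X]big_seq [X in _ + X]big1 ?addr0 => [|u]; last first.
  rewrite mem_words => /eqP um; apply: big1 => v _.
  rewrite /shift_unit um take_oversize ?(ltnW wm) //.
  case: eqVneq => [wu|_]; last by rewrite mulr0.
  by move: wm; rewrite wu um ltnn.
under eq_bigr do rewrite sum_matrix_units eq_sym.
by rewrite big_if_eq_uniq ?iota_uniq // mem_iota add0n wm.
Qed.

Lemma approx_high m f w : (m <= size w)%N ->
  approx m f w = \sum_(v <- words m) matrix_coef (take m w) v * f (v ++ drop m w).
Proof.
move=> mw; rewrite /approx sum_shift_units // big_seq big1 ?add0r // => k.
rewrite mem_iota add0n => km; rewrite sum_matrix_units.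
by case: eqP => // wk; move: km mw; rewrite wk => /leq_trans h /h; rewrite ltnn.
Qed.

Lemma approx_proj_level m f w : approx m f w = approx m (proj_level (size w) f) w.
Proof.
have [wm|mw] := ltnP (size w) m.
  rewrite !approx_low //; apply: eq_big_seq => v; rewrite mem_words => /eqP vw.
  by rewrite /proj_level vw eqxx.
rewrite !approx_high //; apply: eq_big_seq => v; rewrite mem_words => /eqP vm.
by rewrite /proj_level size_cat size_drop vm subnKC // eqxx.
Qed.

Lemma approx_rcons m f w i : (m <= size w)%N ->
  approx m f (rcons w i) = approx m (Rstar i f) w.
Proof.
move=> mw; rewrite !approx_high ?size_rcons ?(leq_trans mw) //.
rewrite -cats1 takel_cat // drop_cat; case: ltnP => h.
  by apply: eq_bigr => v _; rewrite /Rstar -cats1 catA.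
have mE : m = size w by apply/eqP; rewrite eqn_leq mw h.
rewrite mE subnn drop0 drop_size; apply: eq_bigr => v _.
by rewrite /Rstar cats0 -cats1.
Qed.

Hypothesis hT : bounded_op T.

Lemma bounded_op_in_level k f w : in_level k f ->
  T f w = \sum_(v <- words k) matrix_coef w v * f v.
Proof.
move=> lf.
have lb v : in_level (size v) (basis_vec v).
  by move=> u; rewrite /basis_vec; have [->|//] := eqVneq u v; rewrite eqxx.
have fE : f = fun w => \sum_(v <- words k) f v * basis_vec v w.
  apply: funext => u; rewrite /basis_vec.
  under eq_bigr do rewrite (fun_if (GRing.mul _)) mulr1 mulr0 eq_sym.
  rewrite big_if_eq_uniq ?uniq_words // mem_words.
  by case: eqVneq => // /lf ->.
rewrite {1}fE bounded_op_sum //; last first.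
  by move=> v; apply: (@l2_in_level _ _ (size v)) => u /(lb v) ->; rewrite mulr0.
apply: eq_bigr => v _; rewrite bounded_opZ //; [exact: mulrC | exact: l2_in_level (lb v)].
Qed.

Lemma approx_eq_low m k f w : (k <= m)%N -> in_level k f -> size w = k ->
  T f w = approx m f w.
Proof.
move=> km lf wk; rewrite (bounded_op_in_level w lf).
have [kltm|mlek] := ltnP k m; first by rewrite approx_low wk.
have -> : m = k by apply/eqP; rewrite eqn_leq km mlek.
rewrite approx_high ?wk // take_oversize ?drop_oversize ?wk //.
by under [RHS]eq_bigr do rewrite cats0.
Qed.

End Approximant.

Section Minkowski.
Variable R : realType.

(* Weighted AM-GM: [0 <= u (t x + y)^2 = t x^2 + 2 x y + u y^2]. *)
Lemma sqabs_sub_le (a b : R[i]) (t u : R) : 0 < t -> t * u = 1 ->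
  sqabs (a - b) <= (1 + t) * sqabs a + (1 + u) * sqabs b.
Proof.
move=> t0 tu; have u0 : 0 < u by rewrite -(pmulr_rgt0 _ t0) tu ltr01.
have amgm x y : 0 <= t * x ^+ 2 + 2 * x * y + u * y ^+ 2.
  have -> : t * x ^+ 2 + 2 * x * y + u * y ^+ 2 = u * (t * x + y) ^+ 2.
    transitivity ((t * u) * (t * x ^+ 2) + 2 * (t * u) * x * y + u * y ^+ 2).
      by rewrite tu; ring.
    by ring.
  by rewrite mulr_ge0 ?sqr_ge0 // ltW.
rewrite /sqabs; case: a => [a1 a2]; case: b => [b1 b2] /=.
have := amgm a1 b1; have := amgm a2 b2; rewrite !expr2; nra.
Qed.

Lemma minkowski_sqabs_pos (I : Type) (s : seq I) (a b : I -> R[i]) (A B : R) :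
  0 < A -> 0 < B ->
  \sum_(i <- s) sqabs (a i) <= A ^+ 2 -> \sum_(i <- s) sqabs (b i) <= B ^+ 2 ->
  \sum_(i <- s) sqabs (a i - b i) <= (A + B) ^+ 2.
Proof.
move=> A0 B0 ha hb.
have tu : B / A * (A / B) = 1 by rewrite mulrA divfK ?gt_eqF // divff // gt_eqF.
apply: le_trans (ler_sum _ (fun i _ => sqabs_sub_le (a i) (b i) (divr_gt0 B0 A0) tu)) _.
rewrite big_split /= -!mulr_sumr.
apply: le_trans (lerD (ler_wpM2l _ ha) (ler_wpM2l _ hb)) _;
  try by rewrite addr_ge0 // divr_ge0 // ltW.
suff -> : (1 + B / A) * A ^+ 2 + (1 + A / B) * B ^+ 2 = (A + B) ^+ 2 by [].
by field; rewrite !gt_eqF.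
Qed.

Lemma minkowski_sqabs (I : Type) (s : seq I) (a b : I -> R[i]) (A B : R) :
  0 <= A -> 0 <= B ->
  \sum_(i <- s) sqabs (a i) <= A ^+ 2 -> \sum_(i <- s) sqabs (b i) <= B ^+ 2 ->
  \sum_(i <- s) sqabs (a i - b i) <= (A + B) ^+ 2.
Proof.
move=> A0 B0 ha hb; apply/ler_addgt0Pr => e e0.
pose del := Num.min 1 (e / (4 * (A + B + 1))).
have del0 : 0 < del by rewrite lt_min ltr01 divr_gt0 // mulr_gt0 // ltr_wpDl // addr_ge0.
have del1 : del <= 1 by rewrite ge_min lexx.
have del2 : del * (4 * (A + B + 1)) <= e.
  by rewrite -ler_pdivlMr ?mulr_gt0 ?ltr_wpDl ?addr_ge0 // ge_min lexx orbT.
clearbody del.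
have bnd X Y : 0 <= X -> Y <= X ^+ 2 -> Y <= (X + del) ^+ 2.
  move=> X0 YX; apply: le_trans YX _.
  by rewrite ler_pXn2r ?nnegrE ?addr_ge0 ?(ltW del0) // lerDl ltW.
have := minkowski_sqabs_pos (ltr_wpDl A0 del0) (ltr_wpDl B0 del0) (bnd _ _ A0 ha) (bnd _ _ B0 hb).
move/le_trans; apply.
have -> : (A + del + (B + del)) ^+ 2 = (A + B) ^+ 2 + del * (4 * (A + B) + 4 * del).
  by ring.
rewrite lerD2l; apply: le_trans del2; apply: ler_wpM2l; [exact: ltW | lra].
Qed.

End Minkowski.

Lemma sum_sqr_le (R : realDomainType) (I : Type) (s : seq I) (r : I -> R) :
  (forall i, 0 <= r i) -> \sum_(i <- s) r i ^+ 2 <= (\sum_(i <- s) r i) ^+ 2.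
Proof.
move=> r0; elim: s => [|i s IH]; first by rewrite !big_nil expr0n.
rewrite !big_cons; have : 0 <= \sum_(j <- s) r j by apply: sumr_ge0.
have := r0 i; rewrite !expr2 in IH *; nra.
Qed.

Section ErrorEstimate.
Variables (R : realType) (d : nat) (T : op R d).
Local Notation vec := (vec R d).
Local Notation words := (words d).
Local Notation C i := (commutator T (Rstar i)).
Hypothesis hT : bounded_op T.
Hypothesis hC : forall i, bounded_op (C i).
Hypothesis hsum : forall i, (\sum_(n <oo) restr_norm (C i) n < +oo)%E.
Implicit Types (f x : vec) (k m n : nat).

Lemma restr_norm_comm_fin i n : (restr_norm (C i) n < +oo)%E.
Proof.
by apply: le_lt_trans (hsum i); apply: nneseries_ge_term => k; apply: restr_norm_ge0.
Qed.

Lemma restr_norm_commE i n : (fine (restr_norm (C i) n))%:E = restr_norm (C i) n.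
Proof. by rewrite fineK // ge0_fin_numE ?restr_norm_comm_fin ?restr_norm_ge0. Qed.

Lemma fine_restr_norm_comm_ge0 i n : 0 <= fine (restr_norm (C i) n).
Proof. by rewrite -lee_fin restr_norm_commE restr_norm_ge0. Qed.

Definition comm_norm n : R := \sum_(i <- enum 'I_d) fine (restr_norm (C i) n).

Lemma comm_norm_ge0 n : 0 <= comm_norm n.
Proof. by apply: sumr_ge0 => i _; apply: fine_restr_norm_comm_ge0. Qed.

Lemma comm_norm_tail_le e : 0 < e ->
  exists m, forall K, \sum_(m.+1 <= k < K) comm_norm k <= e.
Proof.
move=> e0.
have fin : (\sum_(k <oo) (comm_norm k)%:E < +oo)%E.
  under eq_eseriesr do rewrite /comm_norm -sumEFin; under eq_eseriesr do under eq_bigr do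
    rewrite restr_norm_commE.
  rewrite nneseries_sum; last by move=> i k _; apply: restr_norm_ge0.
  by apply: lte_sum_pinfty => i _; apply: hsum.
have u0 k : (0 <= (comm_norm k)%:E)%E by rewrite lee_fin comm_norm_ge0.
have [N _ hN] := nneseries_tail_lt u0 fin e0.
exists N => K; rewrite -lee_fin -sumEFin.
apply: le_trans (nneseries_lim_ge _ _) (ltW (hN N.+1 (leqnSn N))) => k _ _; exact: u0.
Qed.

Lemma Rstar_in_level n x i : in_level n.+1 x -> in_level n (Rstar i x).
Proof. by move=> lx w hw; rewrite /Rstar lx // size_rcons eqSS. Qed.

Lemma level_sqnorm_Rstar n x :
  level_sqnorm x n.+1 = \sum_(i <- enum 'I_d) level_sqnorm (Rstar i x) n.
Proof. by rewrite /level_sqnorm big_words_rcons. Qed.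

Local Notation E m := (opsub T (approx T m)).

Lemma approx_error_rcons m x w i : (m <= size w)%N ->
  E m x (rcons w i) = E m (Rstar i x) w - C i x w.
Proof. by move=> mw; rewrite /opsub /commutator approx_rcons // /Rstar; ring. Qed.

Lemma comm_level_sqnorm_le n x : in_level n.+1 x ->
  \sum_(i <- enum 'I_d) level_sqnorm (C i x) n <= (comm_norm n.+1 * vnorm x) ^+ 2.
Proof.
move=> lx; rewrite exprMn /comm_norm; apply: le_trans (_ : _ <=
    \sum_(i <- enum 'I_d) (fine (restr_norm (C i) n.+1)) ^+ 2 * vnorm x ^+ 2) _.
  apply: ler_sum => i _; rewrite -exprMn.
  apply: le_trans (level_sqnorm_le_vnorm _ (bounded_op_l2 (hC i) (l2_in_level lx))) _.
  rewrite ler_pXn2r ?nnegrE ?vnorm_ge0 ?mulr_ge0 ?fine_restr_norm_comm_ge0 ?vnorm_ge0 //.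
  exact: restr_norm_bound (restr_norm_comm_fin i n.+1) lx.
rewrite -mulr_suml ler_wpM2r ?sqr_ge0 //.
by apply: sum_sqr_le => i; apply: fine_restr_norm_comm_ge0.
Qed.

Lemma approx_error_step m n c : (m <= n)%N -> 0 <= c ->
  (forall x, in_level n x -> level_sqnorm (E m x) n <= c ^+ 2 * level_sqnorm x n) ->
  forall x, in_level n.+1 x ->
  level_sqnorm (E m x) n.+1 <= (c + comm_norm n.+1) ^+ 2 * level_sqnorm x n.+1.
Proof.
move=> mn c0 IH x lx; have L0 := level_sqnorm_ge0 x n.+1.
have vx : vnorm x = Num.sqrt (level_sqnorm x n.+1) := vnorm_in_level lx.
have -> : (c + comm_norm n.+1) ^+ 2 * level_sqnorm x n.+1
          = (c * vnorm x + comm_norm n.+1 * vnorm x) ^+ 2.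
  by rewrite -mulrDl exprMn vx sqr_sqrtr.
rewrite /level_sqnorm big_words_rcons (eq_bigr (fun i =>
  \sum_(w <- words n) sqabs (E m (Rstar i x) w - C i x w))); last first.
  move=> i _; rewrite big_seq [RHS]big_seq; apply: eq_bigr => w.
  by rewrite mem_words => /eqP wn; rewrite approx_error_rcons ?wn.
rewrite -(big_allpairs (F := fun p : 'I_d * word d =>
  sqabs (E m (Rstar p.1 x) p.2 - C p.1 x p.2))) /=.
apply: (minkowski_sqabs (a := fun p => E m (Rstar p.1 x) p.2) (b := fun p => C p.1 x p.2)).
- by rewrite mulr_ge0 ?vnorm_ge0.
- by rewrite mulr_ge0 ?comm_norm_ge0 ?vnorm_ge0.
- rewrite big_allpairs /= exprMn vx sqr_sqrtr // -/(level_sqnorm _ _).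
  rewrite level_sqnorm_Rstar mulr_sumr; apply: ler_sum => i _.
  exact/IH/Rstar_in_level.
- by rewrite big_allpairs; apply: comm_level_sqnorm_le.
Qed.

Lemma approx_error_low m n x : (n <= m)%N -> in_level n x -> level_sqnorm (E m x) n = 0.
Proof.
move=> nm lx; rewrite /level_sqnorm big_seq big1 // => w; rewrite mem_words => /eqP wn.
by rewrite /opsub (approx_eq_low hT nm lx wn) subrr sqabs0.
Qed.

Lemma approx_error_level m n x : in_level n x ->
  level_sqnorm (E m x) n <= (\sum_(m.+1 <= k < n.+1) comm_norm k) ^+ 2 * level_sqnorm x n.
Proof.
elim: n x => [|n IH] x lx.
  by rewrite approx_error_low // mulr_ge0 ?sqr_ge0 ?level_sqnorm_ge0.
have [nm|mn] := leqP n.+1 m.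
  by rewrite approx_error_low // mulr_ge0 ?sqr_ge0 ?level_sqnorm_ge0.
rewrite big_nat_recr //=; apply: approx_error_step => //.
by apply: sumr_ge0 => k _; apply: comm_norm_ge0.
Qed.

Hypothesis hB : block_diagonal T.

Lemma approx_error_norm m e : 0 <= e -> (forall K, \sum_(m.+1 <= k < K) comm_norm k <= e) ->
  forall f, l2 f -> vnorm (E m f) <= e * vnorm f.
Proof.
move=> e0 tail f hf; apply: vnorm_le_levels => // n.
have -> : level_sqnorm (E m f) n = level_sqnorm (E m (proj_level n f)) n.
  rewrite /level_sqnorm big_seq [RHS]big_seq; apply: eq_bigr => w.
  rewrite mem_words => /eqP wn; rewrite /opsub (block_diagonal_coord hT hB w hf).
  by rewrite (approx_proj_level _ _ f) wn.
apply: le_trans (approx_error_level m (@proj_level_in_level _ _ n f)) _.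
rewrite level_sqnorm_proj ler_wpM2r ?level_sqnorm_ge0 // ler_pXn2r ?nnegrE //.
by apply: sumr_ge0 => k _; apply: comm_norm_ge0.
Qed.

End ErrorEstimate.

Theorem corollary3p6 (R : realType) (d : nat) (hd : (2 <= d)%N) (T : op R d) :
  bounded_op T -> block_diagonal T ->
  (forall i : 'I_d, classS (commutator T (@Rstar R d i))) ->
  in_Cuntz_Toeplitz T.
Proof.
move=> hT hB hC eps eps0.
have j0 : 'I_d := Ordinal (ltnW hd).
have bounded_comm i : bounded_op (commutator T (Rstar i)) by case: (hC i).
have summable_comm i : (\sum_(n <oo) restr_norm (commutator T (Rstar i)) n < +oo)%E.
  by case: (hC i) => _ [].
have [m tail] := comm_norm_tail_le summable_comm eps0.
exists (approx T m); split; first exact: star_poly_approx j0 m.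
exact: approx_error_norm hT bounded_comm summable_comm hB m eps (ltW eps0) tail.
Qed.
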